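(* Let $\mathscr{a}\in\mathbb{R}$, $\mathscr{b}\in(\mathscr{a},\infty)$, $\rho\in(0,\infty)$, $f\in C([\mathscr{a},\mathscr{b}],\mathbb{R})$, for $\theta=(\theta_1,\theta_2,\theta_3,\theta_4)\in\mathbb{R}^4$ and $x\in\mathbb{R}$ let $\mathscr{N}^\theta(x)=\theta_3\max\{\theta_1x+\theta_2,0\}+\theta_4$ and $\mathcal{L}(\theta)=\rho\int_{\mathscr{a}}^{\mathscr{b}}(\mathscr{N}^\theta(y)-f(y))^2\,\mathrm{d}y$, and let $m\in\mathbb{R}$, $\varepsilon\in(0,\infty)$ satisfy $m=\rho\int_{\mathscr{a}}^{\mathscr{b}}\big(f(x)-(\mathscr{b}-\mathscr{a})^{-1}\int_{\mathscr{a}}^{\mathscr{b}}f(y)\,\mathrm{d}y\big)^2\,\mathrm{d}x$. Then there exists $\mathfrak{C}\in(0,\infty)$ such that for all $\theta\in\mathbb{R}^4$ with $\mathcal{L}(\theta)\le m-\varepsilon$ it holds that $\mathfrak{C}^{-1}\le|\theta_1\theta_3|\le\mathfrak{C}$. *)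

From Stdlib Require Import Reals.
From Coquelicot Require Import Coquelicot.
Open Scope R_scope.

Definition continuous_on_Icc (f : R -> R) (a b : R) : Prop :=
  forall x, a <= x <= b ->
    filterlim f (within (fun y => a <= y <= b) (locally x)) (locally (f x)).

Definition realization (t1 t2 t3 t4 x : R) : R :=
  t3 * Rmax (t1 * x + t2) 0 + t4.

Definition risk (a b rho : R) (f : R -> R) (t1 t2 t3 t4 : R) : R :=
  rho * RInt (fun y => (realization t1 t2 t3 t4 y - f y) ^ 2) a b.

From Stdlib Require Import Reals Lra.
From Coquelicot Require Import Coquelicot.
Open Scope R_scope.

(* Write s = t1 t3 and V = m / rho, the least squared L2 error on [a, b] of a
   constant fit to f.  The realization is |s|-Lipschitz, so if |s| is small it
   stays uniformly close to a constant and its error is at least about V, which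
   exceeds V - eps / rho.  If |s| is large, look at a short interval of length d
   at the end of [a, b] towards which the ReLU is active.  Either the active
   affine piece covers it, and then the realization is so steep there that its
   error alone exceeds V; or the realization is constant on the rest of [a, b],
   and then its error is at least V minus the error of that constant on the short
   interval, which is below eps / rho once d is small (a huge constant is ruled
   out directly).  Both bounds on |s| are uniform in the remaining parameters. *)

Lemma sq_add_ge u w delta : 0 < delta -> (1 - delta) * u ^ 2 - w ^ 2 / delta <= (u + w) ^ 2.
Proof.
  intros Hd.
  assert (E : delta * ((u + w) ^ 2 - ((1 - delta) * u ^ 2 - w ^ 2 / delta))
              = (delta * u + w) ^ 2 + delta * w ^ 2) by (field; lra).
  assert (0 <= (delta * u + w) ^ 2 + delta * w ^ 2)
    by (apply Rplus_le_le_0_compat; [| apply Rmult_le_pos; [lra |]]; apply pow2_ge_0).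
  nra.
Qed.

Lemma sq_sub_ge_half u v : u ^ 2 / 2 - v ^ 2 <= (u - v) ^ 2.
Proof. pose proof (pow2_ge_0 (u - 2 * v)). nra. Qed.

Lemma sq_sub_le u v : (u - v) ^ 2 <= 2 * u ^ 2 + 2 * v ^ 2.
Proof. pose proof (pow2_ge_0 (u + v)). nra. Qed.

Lemma Rabs_affine_ge beta s x y :
  Rabs (beta + s * y) - Rabs s * Rabs (x - y) <= Rabs (beta + s * x).
Proof.
  rewrite <- Rabs_mult.
  pose proof (Rabs_triang_inv (beta + s * y) (s * (y - x))) as H.
  replace (beta + s * y - s * (y - x)) with (beta + s * x) in H by ring.
  replace (s * (y - x)) with (- (s * (x - y))) in H by ring.
  rewrite Rabs_Ropp in H. exact H.
Qed.

Lemma affine_abs_ge_on_third beta s p d : 0 <= d ->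
  exists q, p <= q /\ q + d / 3 <= p + d /\
    forall x, q <= x <= q + d / 3 -> Rabs s * d / 6 <= Rabs (beta + s * x).
Proof.
  intros Hd. pose proof (Rabs_pos s) as Hs.
  destruct (Rle_lt_dec (Rabs s * d / 2) (Rabs (beta + s * (p + d)))) as [Hend | Hend].
  - exists (p + 2 * d / 3). split; [lra | split; [lra |]]. intros x Hx.
    pose proof (Rabs_affine_ge beta s x (p + d)) as H.
    rewrite (Rabs_left1 (x - (p + d))) in H by lra.
    assert (Rabs s * (- (x - (p + d))) <= Rabs s * (d / 3)) by (apply Rmult_le_compat_l; lra).
    lra.
  - exists p. split; [lra | split; [lra |]]. intros x Hx.
    pose proof (Rabs_triang (beta + s * (p + d)) (- (beta + s * p))) as Hp.
    replace (beta + s * (p + d) + - (beta + s * p)) with (s * d) in Hp by ring.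
    rewrite Rabs_Ropp, Rabs_mult, (Rabs_right d) in Hp by lra.
    pose proof (Rabs_affine_ge beta s x p) as H.
    rewrite (Rabs_right (x - p)) in H by lra.
    assert (Rabs s * (x - p) <= Rabs s * (d / 3)) by (apply Rmult_le_compat_l; lra).
    lra.
Qed.

Lemma lipschitz_continuous (g : R -> R) L x :
  (forall y z, Rabs (g y - g z) <= L * Rabs (y - z)) -> continuous g x.
Proof.
  intros Hg. apply filterlim_locally. intros eps.
  assert (HL : 0 <= L).
  { specialize (Hg 1 0). pose proof (Rabs_pos (g 1 - g 0)).
    rewrite Rminus_0_r, Rabs_R1 in Hg. lra. }
  assert (Hpos : 0 < eps / (L + 1)) by (apply Rdiv_lt_0_compat; [apply cond_pos | lra]).
  exists (mkposreal _ Hpos). intros y Hy.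
  change (Rabs (y - x) < eps / (L + 1)) in Hy.
  change (Rabs (g y - g x) < eps).
  apply (Rle_lt_trans _ (L * Rabs (y - x))); [apply Hg |].
  apply (Rle_lt_trans _ ((L + 1) * Rabs (y - x))); [pose proof (Rabs_pos (y - x)); nra |].
  replace (pos eps) with ((L + 1) * (eps / (L + 1))) by (field; lra).
  apply Rmult_lt_compat_l; lra.
Qed.

Lemma continuous_sq_sub (g h : R -> R) x :
  continuous g x -> continuous h x -> continuous (fun y => (g y - h y) ^ 2) x.
Proof.
  intros Hg Hh.
  apply (continuous_comp (U := R_UniformSpace) (V := R_UniformSpace)
           (fun y => g y - h y) (fun u => u ^ 2)).
  - apply continuity_pt_filterlim, continuity_pt_minus; apply continuity_pt_filterlim; assumption.
  - apply continuity_pt_filterlim, derivable_continuous_pt, derivable_pt_pow.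
Qed.

Lemma continuous_affine_R (g : R -> R) k l x :
  continuous g x -> continuous (fun y => k * g y + l) x.
Proof.
  intros Hg. apply continuity_pt_filterlim.
  apply (continuity_pt_plus (fun y => k * g y) (fun _ => l));
    [apply (continuity_pt_mult (fun _ => k) g); [| apply continuity_pt_filterlim, Hg] |];
    apply continuity_pt_const; intros ??; reflexivity.
Qed.

Lemma ex_RInt_continuous_R (g : R -> R) p q :
  (forall x, continuous g x) -> ex_RInt g p q.
Proof.
  intros Hg. apply (ex_RInt_continuous (V := R_CompleteNormedModule)). intros; apply Hg.
Qed.

Lemma RInt_plus_R (g h : R -> R) p q : ex_RInt g p q -> ex_RInt h p q ->
  RInt (fun x => g x + h x) p q = RInt g p q + RInt h p q.
Proof. exact (RInt_plus (V := R_CompleteNormedModule) g h p q). Qed.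

Lemma RInt_affine_R (g : R -> R) k l p q : ex_RInt g p q ->
  RInt (fun x => k * g x + l) p q = k * RInt g p q + (q - p) * l.
Proof.
  intros Hg. rewrite RInt_plus_R.
  - f_equal; [exact (RInt_scal (V := R_CompleteNormedModule) g p q k Hg) |].
    rewrite RInt_const. reflexivity.
  - exact (ex_RInt_scal (V := R_CompleteNormedModule) g p q k Hg).
  - apply ex_RInt_const.
Qed.

Lemma RInt_ext_open (g h : R -> R) p q : p <= q ->
  (forall x, p < x < q -> g x = h x) -> RInt g p q = RInt h p q.
Proof.
  intros Hpq Hgh. apply RInt_ext. intros x.
  rewrite Rmin_left, Rmax_right by exact Hpq. apply Hgh.
Qed.

Lemma RInt_Chasles3 (g : R -> R) a p q b : (forall x, continuous g x) ->
  RInt g a b = RInt g a p + RInt g p q + RInt g q b.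
Proof.
  intros Hg.
  rewrite <- (RInt_Chasles g a p b), <- (RInt_Chasles g p q b)
    by apply ex_RInt_continuous_R, Hg.
  change (RInt g a p + (RInt g p q + RInt g q b) = RInt g a p + RInt g p q + RInt g q b).
  ring.
Qed.

Lemma RInt_le_sub_interval (g : R -> R) a p q b : (forall x, continuous g x) ->
  (forall x, 0 <= g x) -> a <= p -> p <= q -> q <= b -> RInt g p q <= RInt g a b.
Proof.
  intros Hg Hpos hap hpq hqb. rewrite (RInt_Chasles3 g a p q b Hg).
  assert (0 <= RInt g a p) by (apply RInt_ge_0; auto; apply ex_RInt_continuous_R, Hg).
  assert (0 <= RInt g q b) by (apply RInt_ge_0; auto; apply ex_RInt_continuous_R, Hg).
  lra.
Qed.

Lemma RInt_ge_const (g : R -> R) p q T : (forall x, continuous g x) -> p <= q ->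
  (forall x, p < x < q -> T <= g x) -> (q - p) * T <= RInt g p q.
Proof.
  intros Hg Hpq HT.
  replace ((q - p) * T) with (RInt (fun _ => T) p q) by (rewrite RInt_const; reflexivity).
  apply RInt_le; auto using ex_RInt_const, ex_RInt_continuous_R.
Qed.

Lemma RInt_le_const (g : R -> R) p q T : (forall x, continuous g x) -> p <= q ->
  (forall x, p < x < q -> g x <= T) -> RInt g p q <= (q - p) * T.
Proof.
  intros Hg Hpq HT.
  replace ((q - p) * T) with (RInt (fun _ => T) p q) by (rewrite RInt_const; reflexivity).
  apply RInt_le; auto using ex_RInt_const, ex_RInt_continuous_R.
Qed.

Lemma RInt_sq_sub_const (F : R -> R) a b c : a <> b -> (forall x, continuous F x) ->
  let mu := / (b - a) * RInt F a b in
  RInt (fun x => (c - F x) ^ 2) a b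
  = RInt (fun x => (F x - mu) ^ 2) a b + (b - a) * (c - mu) ^ 2.
Proof.
  intros hab HF mu.
  assert (Hmu : RInt F a b = (b - a) * mu).
  { unfold mu. rewrite <- Rmult_assoc, Rinv_r, Rmult_1_l by lra. reflexivity. }
  clearbody mu.
  rewrite (RInt_ext _ (fun x => (F x - mu) ^ 2 + (-2 * (c - mu) * F x + (c ^ 2 - mu ^ 2))))
    by (intros; cbn; ring).
  rewrite RInt_plus_R, RInt_affine_R, Hmu.
  - apply Rplus_eq_compat_l. ring.
  - apply ex_RInt_continuous_R, HF.
  - apply ex_RInt_continuous_R. intros; apply continuous_sq_sub; [apply HF | apply continuous_const].
  - apply ex_RInt_continuous_R. intros; apply continuous_affine_R, HF.
Qed.

Definition clamp (a b x : R) : R := Rmax a (Rmin b x).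

Lemma clamp_in a b x : a <= b -> a <= clamp a b x <= b.
Proof. intros; unfold clamp, Rmax, Rmin; repeat destruct Rle_dec; lra. Qed.

Lemma clamp_id a b x : a <= x <= b -> clamp a b x = x.
Proof. intros; unfold clamp, Rmax, Rmin; repeat destruct Rle_dec; lra. Qed.

Lemma clamp_lipschitz a b x y : a <= b -> Rabs (clamp a b x - clamp a b y) <= Rabs (x - y).
Proof.
  intros; unfold clamp, Rmax, Rmin; repeat destruct Rle_dec; unfold Rabs;
    repeat destruct Rcase_abs; lra.
Qed.

(* [continuous_on_Icc] gives only one-sided continuity at [a] and [b]; composing
   with [clamp a b] yields a function continuous on all of R, to which the
   integrability results for continuous functions apply. *)
Lemma continuous_extension_Icc (f : R -> R) a b : a <= b -> continuous_on_Icc f a b ->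
  exists F M, (forall x, continuous F x) /\ (forall x, a <= x <= b -> F x = f x) /\
    (forall x, F x ^ 2 <= M).
Proof.
  intros hab hf. set (F := fun x => f (clamp a b x)).
  assert (HF : forall x, continuous F x).
  { intros x.
    apply (filterlim_comp _ _ _ (clamp a b) f _
             (within (fun y => a <= y <= b) (locally (clamp a b x)))).
    - intros P [eps Heps]. exists eps. intros y Hy. apply Heps.
      + change (Rabs (clamp a b y - clamp a b x) < eps).
        eapply Rle_lt_trans; [apply clamp_lipschitz, hab | exact Hy].
      + apply clamp_in, hab.
    - apply hf, clamp_in, hab. }
  destruct (continuity_ab_maj (fun x => F x ^ 2) a b hab) as [c [Hc _]].
  { intros x _. apply continuity_pt_filterlim.
    apply (continuous_comp (U := R_UniformSpace) (V := R_UniformSpace) F (fun u => u ^ 2));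
      [apply HF | apply continuity_pt_filterlim, derivable_continuous_pt, derivable_pt_pow]. }
  exists F, (F c ^ 2). split; [exact HF | split].
  - intros x Hx. unfold F. rewrite clamp_id by exact Hx. reflexivity.
  - intros x. replace (F x) with (F (clamp a b x))
      by (unfold F; rewrite (clamp_id a b (clamp a b x)) by (apply clamp_in, hab); reflexivity).
    apply Hc, clamp_in, hab.
Qed.

Lemma Rmax0_lipschitz u v : Rabs (Rmax u 0 - Rmax v 0) <= Rabs (u - v).
Proof. unfold Rmax, Rabs; repeat destruct Rle_dec; repeat destruct Rcase_abs; lra. Qed.

Lemma realization_lipschitz t1 t2 t3 t4 x y :
  Rabs (realization t1 t2 t3 t4 x - realization t1 t2 t3 t4 y)
  <= Rabs (t1 * t3) * Rabs (x - y).
Proof.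
  unfold realization.
  replace (_ - _) with (t3 * (Rmax (t1 * x + t2) 0 - Rmax (t1 * y + t2) 0)) by ring.
  pose proof (Rmax0_lipschitz (t1 * x + t2) (t1 * y + t2)) as H.
  replace (t1 * x + t2 - (t1 * y + t2)) with (t1 * (x - y)) in H by ring.
  rewrite !Rabs_mult in *. pose proof (Rabs_pos t3). nra.
Qed.

Lemma realization_affine_or_const t1 t2 t3 t4 a b d : t1 <> 0 -> 0 < d <= b - a ->
  (exists p beta, a <= p /\ p + d <= b /\
     forall x, p <= x <= p + d -> realization t1 t2 t3 t4 x = beta + t1 * t3 * x) \/
  (exists q r, a <= q /\ r <= b /\ b - a - d <= r - q /\
     forall x, q < x < r -> realization t1 t2 t3 t4 x = t4).
Proof.
  intros Ht1 Hd.
  assert (Hact : forall x, 0 <= t1 * x + t2 ->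
                 realization t1 t2 t3 t4 x = t3 * t2 + t4 + t1 * t3 * x)
    by (intros x Hx; unfold realization; rewrite Rmax_left by lra; ring).
  assert (Hinact : forall x, t1 * x + t2 <= 0 -> realization t1 t2 t3 t4 x = t4)
    by (intros x Hx; unfold realization; rewrite Rmax_right by lra; ring).
  destruct (Rdichotomy _ _ Ht1) as [Hneg | Hpos].
  - destruct (Rle_lt_dec 0 (t1 * (a + d) + t2)).
    + left. exists a, (t3 * t2 + t4). repeat split; try lra.
      intros x Hx. apply Hact. nra.
    + right. exists (a + d), b. repeat split; try lra.
      intros x Hx. apply Hinact. nra.
  - destruct (Rle_lt_dec 0 (t1 * (b - d) + t2)).
    + left. exists (b - d), (t3 * t2 + t4). repeat split; try lra.
      intros x Hx. apply Hact. nra.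
    + right. exists a, (b - d). repeat split; try lra.
      intros x Hx. apply Hinact. nra.
Qed.

Definition sq_err (a b : R) (F N : R -> R) : R := RInt (fun x => (N x - F x) ^ 2) a b.

Lemma variance_le_sq_err_const (F : R -> R) a b c : a < b -> (forall x, continuous F x) ->
  RInt (fun x => (F x - / (b - a) * RInt F a b) ^ 2) a b <= sq_err a b F (fun _ => c).
Proof.
  intros hab HF. unfold sq_err. rewrite (RInt_sq_sub_const F a b c) by (auto; lra).
  assert (0 <= (b - a) * (c - / (b - a) * RInt F a b) ^ 2)
    by (apply Rmult_le_pos; [lra | apply pow2_ge_0]).
  lra.
Qed.

Section ConstantFitGap.

Variables (F : R -> R) (a b V e M : R).
Hypotheses (hab : a < b) (he : 0 < e) (F_cont : forall x, continuous F x)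
  (F_sq_le : forall x, F x ^ 2 <= M)
  (V_le_const_fit : forall c, V <= sq_err a b F (fun _ => c)).

Lemma continuous_sq_err_integrand N x :
  continuous N x -> continuous (fun y => (N y - F y) ^ 2) x.
Proof. intros HN. apply continuous_sq_sub; [exact HN | apply F_cont]. Qed.

Lemma sq_err_ge_near_const N c D delta : (forall x, continuous N x) -> 0 < delta <= 1 ->
  (forall x, a < x < b -> Rabs (N x - c) <= D) ->
  (1 - delta) * V - (b - a) * (D ^ 2 / delta) <= sq_err a b F N.
Proof.
  intros HN Hdelta HD.
  assert (Hc : forall x, continuous (fun y => (c - F y) ^ 2) x)
    by (intros; apply continuous_sq_err_integrand, continuous_const).
  assert (Hpt : forall x, a < x < b ->
            (1 - delta) * (c - F x) ^ 2 + - (D ^ 2 / delta) <= (N x - F x) ^ 2).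
  { intros x Hx.
    replace (N x - F x) with ((c - F x) + (N x - c)) by ring.
    pose proof (sq_add_ge (c - F x) (N x - c) delta (proj1 Hdelta)).
    assert ((N x - c) ^ 2 / delta <= D ^ 2 / delta).
    { apply Rmult_le_compat_r; [left; apply Rinv_0_lt_compat; lra |].
      apply pow_maj_Rabs, HD, Hx. }
    lra. }
  assert (Hint : RInt (fun x => (1 - delta) * (c - F x) ^ 2 + - (D ^ 2 / delta)) a b
                 <= sq_err a b F N).
  { apply RInt_le; [lra | | | exact Hpt]; apply ex_RInt_continuous_R; intros x.
    - apply continuous_affine_R, Hc.
    - apply continuous_sq_err_integrand, HN. }
  rewrite RInt_affine_R in Hint by (apply ex_RInt_continuous_R, Hc).
  assert ((1 - delta) * V <= (1 - delta) * RInt (fun x => (c - F x) ^ 2) a b)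
    by (apply Rmult_le_compat_l; [lra | apply V_le_const_fit]).
  lra.
Qed.

Lemma sq_err_gap_near_const : exists D0, 0 < D0 /\ forall N c D,
  (forall x, continuous N x) -> (forall x, a < x < b -> Rabs (N x - c) <= D) -> D <= D0 ->
  V - e < sq_err a b F N.
Proof.
  pose proof (Rabs_pos V) as HV.
  set (delta := e / (2 * (Rabs V + e))).
  assert (Hdelta : 0 < delta <= 1).
  { unfold delta. split; [apply Rdiv_lt_0_compat; lra |].
    apply Rmult_le_reg_r with (2 * (Rabs V + e)); [lra |].
    field_simplify; lra. }
  assert (HdV : delta * Rabs V < e / 2).
  { unfold delta. apply Rmult_lt_reg_r with (2 * (Rabs V + e)); [lra |].
    field_simplify; [nra | lra]. }
  set (kappa := e * delta / (2 * (b - a))).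
  assert (Hkappa : 0 < kappa) by (unfold kappa; apply Rdiv_lt_0_compat; nra).
  exists (Rmin 1 kappa). split; [apply Rmin_glb_lt; lra |].
  intros N c D HN HD HD0.
  assert (HD1 : D <= 1) by (eapply Rle_trans; [exact HD0 | apply Rmin_l]).
  assert (HDk : D <= kappa) by (eapply Rle_trans; [exact HD0 | apply Rmin_r]).
  assert (HDpos : 0 <= D).
  { pose proof (HD ((a + b) / 2) ltac:(lra)). pose proof (Rabs_pos (N ((a + b) / 2) - c)). lra. }
  assert (Herr : (b - a) * (D ^ 2 / delta) <= e / 2).
  { replace (e / 2) with ((b - a) * (kappa / delta)) by (unfold kappa; field; lra).
    apply Rmult_le_compat_l; [lra |].
    apply Rmult_le_compat_r; [left; apply Rinv_0_lt_compat; lra | nra]. }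
  pose proof (sq_err_ge_near_const N c D delta HN Hdelta HD).
  assert (delta * V <= delta * Rabs V)
    by (apply Rmult_le_compat_l; [lra | apply Rle_abs]).
  lra.
Qed.

Lemma sq_err_gap_small_slope : exists eta, 0 < eta /\ forall N s,
  (forall x y, Rabs (N x - N y) <= Rabs s * Rabs (x - y)) -> Rabs s <= eta ->
  V - e < sq_err a b F N.
Proof.
  destruct sq_err_gap_near_const as [D0 [HD0 Hgap]].
  exists (D0 / (b - a)). split; [apply Rdiv_lt_0_compat; lra |].
  intros N s HN Hs. apply (Hgap N (N a) (Rabs s * (b - a))).
  - intros x. exact (lipschitz_continuous N (Rabs s) x HN).
  - intros x Hx. eapply Rle_trans; [apply HN |].
    apply Rmult_le_compat_l; [apply Rabs_pos |]. rewrite Rabs_right; lra.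
  - replace D0 with (D0 / (b - a) * (b - a)) by (field; lra).
    apply Rmult_le_compat_r; lra.
Qed.

Lemma sq_err_gap_const_piece : exists d, 0 < d <= b - a /\ forall N c q r,
  (forall x, continuous N x) -> a <= q -> r <= b -> b - a - d <= r - q ->
  (forall x, q < x < r -> N x = c) -> V - e < sq_err a b F N.
Proof.
  pose proof (Rabs_pos V) as HV.
  assert (HM : 0 <= M) by (pose proof (F_sq_le a); pose proof (pow2_ge_0 (F a)); lra).
  set (Gamma := 2 * M + 4 * (Rabs V + 1) / (b - a)).
  assert (HGamma : 0 <= Gamma)
    by (unfold Gamma; pose proof (Rdiv_lt_0_compat (4 * (Rabs V + 1)) (b - a)); lra).
  set (P := 2 * Gamma + 2 * M).
  assert (HP : 0 <= P) by (unfold P; lra).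
  set (d := Rmin ((b - a) / 2) (e / (P + 1))).
  assert (Hd : 0 < d) by (apply Rmin_glb_lt; [lra | apply Rdiv_lt_0_compat; lra]).
  assert (Hd2 : d <= (b - a) / 2) by apply Rmin_l.
  assert (HdP : d * P < e).
  { assert (Hle : d * (P + 1) <= e / (P + 1) * (P + 1))
      by (apply Rmult_le_compat_r; [lra | apply Rmin_r]).
    replace (e / (P + 1) * (P + 1)) with e in Hle by (field; lra).
    lra. }
  exists d. split; [lra |].
  intros N c q r HN Hq Hr Hqr Hc.
  set (H := fun x => (c - F x) ^ 2).
  assert (HH : forall x, continuous H x)
    by (intros; apply continuous_sq_err_integrand, continuous_const).
  assert (Hpiece : RInt H q r <= sq_err a b F N).
  { unfold sq_err. rewrite <- (RInt_ext_open (fun x => (N x - F x) ^ 2)) by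
      (try lra; intros x Hx; unfold H; rewrite Hc by exact Hx; reflexivity).
    apply RInt_le_sub_interval; try lra.
    - intros; apply continuous_sq_err_integrand, HN.
    - intros; apply pow2_ge_0. }
  (* Either c is so large that the error on [q, r] alone exceeds V, or the error
     of c off [q, r], on a set of length at most d, is below e. *)
  destruct (Rle_lt_dec Gamma (c ^ 2)) as [Hbig | Hsmall].
  - assert (Hlow : (r - q) * (c ^ 2 / 2 - M) <= RInt H q r).
    { apply RInt_ge_const; [exact HH | lra |]. intros x _. unfold H.
      pose proof (sq_sub_ge_half c (F x)). pose proof (F_sq_le x). lra. }
    assert (Hc2 : 2 * (Rabs V + 1) / (b - a) <= c ^ 2 / 2 - M) by (unfold Gamma in Hbig; lra).
    assert (Rabs V + 1 <= (r - q) * (c ^ 2 / 2 - M)).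
    { replace (Rabs V + 1) with ((b - a) / 2 * (2 * (Rabs V + 1) / (b - a))) by (field; lra).
      apply Rmult_le_compat; try lra.
      apply Rlt_le, Rdiv_lt_0_compat; lra. }
    pose proof (Rle_abs V). lra.
  - assert (Hup : forall p p', p <= p' -> RInt H p p' <= (p' - p) * P).
    { intros p p' Hp. apply RInt_le_const; [exact HH | exact Hp |]. intros x _. unfold H.
      pose proof (sq_sub_le c (F x)). pose proof (F_sq_le x). unfold P. lra. }
    pose proof (V_le_const_fit c) as HVc. unfold sq_err in HVc.
    change (V <= RInt H a b) in HVc.
    rewrite (RInt_Chasles3 H a q r b HH) in HVc.
    pose proof (Hup a q Hq). pose proof (Hup r b Hr).
    assert ((q - a) * P + (b - r) * P <= d * P) by nra.
    lra.
Qed.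

Lemma sq_err_gap_steep_piece d : 0 < d -> exists S, 0 < S /\ forall N beta s p,
  (forall x, continuous N x) -> a <= p -> p + d <= b ->
  (forall x, p <= x <= p + d -> N x = beta + s * x) -> S <= s ^ 2 -> V < sq_err a b F N.
Proof.
  intros Hd.
  pose proof (Rabs_pos V) as HV.
  assert (HM : 0 <= M) by (pose proof (F_sq_le a); pose proof (pow2_ge_0 (F a)); lra).
  set (T := M + 3 * (Rabs V + 1) / d).
  assert (HT : 3 * (Rabs V + 1) / d <= T - M) by (unfold T; lra).
  assert (HT0 : 0 < T) by (unfold T; pose proof (Rdiv_lt_0_compat (3 * (Rabs V + 1)) d); lra).
  exists (72 * T / d ^ 2). split; [apply Rdiv_lt_0_compat; [lra | apply pow_lt; lra] |].
  intros N beta s p HN Hp Hpd Haff HS.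
  destruct (affine_abs_ge_on_third beta s p d (Rlt_le _ _ Hd)) as [q [Hq [Hqd Habs]]].
  assert (Hs2 : T <= s ^ 2 * d ^ 2 / 72).
  { replace T with (72 * T / d ^ 2 * d ^ 2 / 72) by (field; lra).
    apply Rmult_le_compat_r; [lra |]. apply Rmult_le_compat_r; [apply pow2_ge_0 | exact HS]. }
  assert (Hlow : d / 3 * (T - M) <= RInt (fun x => (N x - F x) ^ 2) q (q + d / 3)).
  { replace (d / 3) with (q + d / 3 - q) at 1 by ring.
    apply RInt_ge_const; [intros; apply continuous_sq_err_integrand, HN | lra |].
    intros x Hx.
    assert (HNx : (Rabs s * d / 6) ^ 2 <= N x ^ 2).
    { rewrite Haff, <- (pow2_abs (beta + s * x)) by lra. apply pow_incr. split.
      - pose proof (Rabs_pos s). apply Rmult_le_pos; nra.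
      - apply Habs; lra. }
    replace ((Rabs s * d / 6) ^ 2) with (s ^ 2 * d ^ 2 / 36) in HNx
      by (rewrite <- (pow2_abs s); field).
    pose proof (sq_sub_ge_half (N x) (F x)). pose proof (F_sq_le x). lra. }
  assert (Rabs V + 1 <= d / 3 * (T - M)).
  { replace (Rabs V + 1) with (d / 3 * (3 * (Rabs V + 1) / d)) by (field; lra).
    apply Rmult_le_compat_l; lra. }
  assert (RInt (fun x => (N x - F x) ^ 2) q (q + d / 3) <= sq_err a b F N).
  { apply RInt_le_sub_interval; try lra.
    - intros; apply continuous_sq_err_integrand, HN.
    - intros; apply pow2_ge_0. }
  pose proof (Rle_abs V). lra.
Qed.

Lemma slope_bounds_of_sq_err_gap : exists C, 0 < C /\ forall t1 t2 t3 t4,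
  sq_err a b F (realization t1 t2 t3 t4) <= V - e -> / C <= Rabs (t1 * t3) <= C.
Proof.
  destruct sq_err_gap_small_slope as [eta [Heta Hsmall]].
  destruct sq_err_gap_const_piece as [d [Hd Hconst]].
  destruct (sq_err_gap_steep_piece d (proj1 Hd)) as [S [HS Hsteep]].
  set (C := Rmax (Rmax 1 S) (/ eta)).
  assert (HC1 : 1 <= C) by (eapply Rle_trans; [apply Rmax_l | apply Rmax_l]).
  assert (HCS : S <= C) by (eapply Rle_trans; [apply Rmax_r | apply Rmax_l]).
  assert (HCeta : / eta <= C) by apply Rmax_r.
  exists C. split; [lra |].
  intros t1 t2 t3 t4 Herr.
  assert (HN : forall x, continuous (realization t1 t2 t3 t4) x)
    by (intros; apply (lipschitz_continuous _ (Rabs (t1 * t3))), realization_lipschitz).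
  assert (Hlow : eta < Rabs (t1 * t3)).
  { destruct (Rlt_le_dec eta (Rabs (t1 * t3))) as [Hlt | Hle]; [exact Hlt | exfalso].
    pose proof (Hsmall _ _ (realization_lipschitz t1 t2 t3 t4) Hle). lra. }
  assert (Hup : (t1 * t3) ^ 2 < S).
  { destruct (Rlt_le_dec ((t1 * t3) ^ 2) S) as [Hlt | Hle]; [exact Hlt | exfalso].
    assert (Ht1 : t1 <> 0) by (intros ->; rewrite Rmult_0_l in Hle; simpl in Hle; lra).
    destruct (realization_affine_or_const t1 t2 t3 t4 a b d Ht1 Hd)
      as [[p [beta [Hp [Hpd Haff]]]] | [q [r [Hq [Hr [Hqr Hflat]]]]]].
    - pose proof (Hsteep _ beta (t1 * t3) p HN Hp Hpd Haff Hle). lra.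
    - pose proof (Hconst _ t4 q r HN Hq Hr Hqr Hflat). lra. }
  split.
  - apply (Rle_trans _ eta); [| lra].
    rewrite <- (Rinv_inv eta). apply Rinv_le_contravar; [apply Rinv_0_lt_compat |]; lra.
  - destruct (Rle_lt_dec (Rabs (t1 * t3)) 1); [lra |].
    rewrite <- (pow2_abs (t1 * t3)) in Hup. nra.
Qed.

End ConstantFitGap.

Theorem proposition5p8 (a b rho : R) (f : R -> R) (m eps : R) :
  a < b -> 0 < rho -> continuous_on_Icc f a b -> 0 < eps ->
  m = rho * RInt (fun x => (f x - / (b - a) * RInt f a b) ^ 2) a b ->
  exists C : R, 0 < C /\
    forall t1 t2 t3 t4 : R,
      risk a b rho f t1 t2 t3 t4 <= m - eps ->
      / C <= Rabs (t1 * t3) <= C.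
Proof.
  intros hab hrho hf heps hm.
  destruct (continuous_extension_Icc f a b (Rlt_le _ _ hab) hf) as [F [M [HF [HFf HM]]]].
  assert (Hagree : forall x, a < x < b -> f x = F x) by (intros; symmetry; apply HFf; lra).
  rewrite (RInt_ext_open f F) in hm by (try lra; exact Hagree).
  rewrite (RInt_ext_open _ (fun x => (F x - / (b - a) * RInt F a b) ^ 2)) in hm
    by (try lra; intros x Hx; rewrite Hagree by exact Hx; reflexivity).
  set (V := RInt (fun x => (F x - / (b - a) * RInt F a b) ^ 2) a b) in hm.
  destruct (slope_bounds_of_sq_err_gap F a b V (eps / rho) M hab
              (Rdiv_lt_0_compat _ _ heps hrho) HF HM
              (fun c => variance_le_sq_err_const F a b c hab HF)) as [C [HC Hbounds]].
  exists C. split; [exact HC |].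
  intros t1 t2 t3 t4 Hrisk. apply (Hbounds t1 t2 t3 t4).
  unfold risk in Hrisk.
  rewrite (RInt_ext_open _ (fun x => (realization t1 t2 t3 t4 x - F x) ^ 2)) in Hrisk
    by (try lra; intros x Hx; rewrite Hagree by exact Hx; reflexivity).
  fold (sq_err a b F (realization t1 t2 t3 t4)) in Hrisk.
  apply (Rmult_le_reg_l rho); [exact hrho |].
  replace (rho * (V - eps / rho)) with (m - eps) by (rewrite hm; field; lra).
  exact Hrisk.
Qed.
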